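(* Let $p$ be a prime, $\zeta=\zeta_p$ a primitive $p$th root of unity, $t=1-\zeta$, and let $C_p$ be cyclic with generator $c$. The cyclic Wedderburn embedding $\omega_p\colon\mathbb{Z}[\zeta]C_p\to\prod_{j\in\mathbb{Z}/p}\mathbb{Z}[\zeta]$, $c\mapsto(\zeta^j)_{j}$, maps $\mathbb{Z}[\zeta]C_p$ isomorphically onto \[ W^{(1)}_p=\Bigl\{(y_j)_{j\in[0,p-1]}\in\prod_{j\in[0,p-1]}\mathbb{Z}[\zeta]\;\Bigm|\;\sum_{j\in[0,i]}(-1)^j\binom{i}{j}y_j\equiv0\pmod{t^i\mathbb{Z}[\zeta]}\ \text{for all }i\in[0,p-1]\Bigr\}. \]
   Context: The product $\prod_{j\in\mathbb{Z}/p}$ is identified with $\prod_{j\in[0,p-1]}$ in the obvious way. *)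

From HB Require Import structures.
From mathcomp Require Import all_boot all_order all_algebra all_field.
Set Implicit Arguments. Unset Strict Implicit. Unset Printing Implicit Defensive.
Import Order.TTheory GRing.Theory Num.Theory.
Local Open Scope ring_scope.

(* Z[zeta] is realised inside algC (algebraic complex numbers). *)

Definition inZz (z x : algC) : Prop :=
  exists q : {poly int}, x = (map_poly (fun n : int => n%:~R : algC) q).[z].

(* x \in y * Z[z] (congruence to 0 modulo the principal ideal y Z[z]) *)
Definition dvdZz (z y x : algC) : Prop := exists2 w, inZz z w & x = y * w.

(* An element of the group ring Z[z]C_p is  sum_k a k c^k  with a : 'I_p -> Z[z].
   The cyclic Wedderburn embedding omega_p sends c to (z^j)_j, hence
   sum_k a k c^k  to  (sum_k a k z^(j k))_j . *)
Definition wedderburn (p : nat) (z : algC) (a : 'I_p -> algC) (j : 'I_p) : algC :=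
  \sum_(k < p) a k * z ^+ (j * k).

(* Multiplication in the group ring of C_p = <c>, c^p = 1 : cyclic convolution *)
Definition cconv (p : nat) (a b : 'I_p -> algC) (k : 'I_p) : algC :=
  \sum_(i < p) \sum_(l < p | ((i + l) %% p == k)%N) a i * b l.

Definition cunit (p : nat) (k : 'I_p) : algC := if (val k == 0)%N then 1 else 0.

Definition W1 (p : nat) (z : algC) (y : 'I_p -> algC) : Prop :=
  (forall j, inZz z (y j)) /\
  forall i : 'I_p,
    dvdZz z ((1 - z) ^+ i) (\sum_(j < p | (j <= i)%N) (-1) ^+ j * 'C(i, j)%:R * y j).

(* With t = 1 - zeta and u_k = 1 + zeta + ... + zeta^(k-1) we have 1 - zeta^k = t u_k,
   so by the binomial theorem the i-th binomial transform of omega_p(a) is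
   t^i sum_k a_k u_k^i = t^i (V a)_i, V = (u_k^i) the Vandermonde matrix of the u_k.
   For p prime each u_j - u_i = zeta^i u_(j-i) (i < j) is a unit of Z[zeta], so det V is
   a unit and V is invertible over Z[zeta]. As the binomial transform is unitriangular,
   omega_p is injective, and y lies in its image iff its i-th binomial transform is
   t^i times an element of Z[zeta] for every i, i.e. iff y is in W^(1)_p. *)

From HB Require Import structures.
From mathcomp Require Import all_boot all_order all_algebra all_field.
From mathcomp Require Import ring.
Import Order.TTheory GRing.Theory Num.Theory.
Set Implicit Arguments. Unset Strict Implicit. Unset Printing Implicit Defensive.
Local Open Scope ring_scope.

Definition binomial_transform (R : pzRingType) n (y : 'I_n -> R) (i : 'I_n) : R :=
  \sum_(j < n | (j <= i)%N) (-1) ^+ j * 'C(i, j)%:R * y j.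

Lemma binomial_transform_inj (R : pzRingType) n (y y' : 'I_n -> R) :
  (forall i, binomial_transform y i = binomial_transform y' i) -> y =1 y'.
Proof.
move=> eq_yy' j; have [m] := ubnP j; elim: m j => // m IH j /ltnSE le_jm.
have := eq_yy' j; rewrite /binomial_transform (bigD1 j) //= [in RHS](bigD1 j) //=.
rewrite (eq_bigr (fun l : 'I_n => (-1) ^+ l * 'C(j, l)%:R * y' l)); last first.
  move=> l /andP [le_lj ne_lj]; rewrite IH // (leq_trans _ le_jm) //.
  by rewrite ltn_neqAle le_lj andbT val_eqE.
by move/addIr; rewrite binn mulr1 => /(congr1 ( *%R ((-1) ^+ j))); rewrite !signrMK.
Qed.

Section IntegralElements.
Variable z : algC.

Lemma inZz_int (n : int) : inZz z n%:~R.
Proof. by exists n%:P; rewrite map_polyC hornerC. Qed.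

Lemma inZz_z : inZz z z.
Proof. by exists 'X; rewrite map_polyX hornerX. Qed.

Lemma inZzD x y : inZz z x -> inZz z y -> inZz z (x + y).
Proof. by move=> [q ->] [r ->]; exists (q + r); rewrite rmorphD hornerD. Qed.

Lemma inZzM x y : inZz z x -> inZz z y -> inZz z (x * y).
Proof. by move=> [q ->] [r ->]; exists (q * r); rewrite rmorphM hornerM. Qed.

Lemma inZz_sum (I : Type) (r : seq I) (P : pred I) (F : I -> algC) :
  (forall i, P i -> inZz z (F i)) -> inZz z (\sum_(i <- r | P i) F i).
Proof. by move=> h; apply: big_ind => //; [exact: (inZz_int 0) | exact: inZzD]. Qed.

Lemma inZz_prod (I : Type) (r : seq I) (P : pred I) (F : I -> algC) :
  (forall i, P i -> inZz z (F i)) -> inZz z (\prod_(i <- r | P i) F i).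
Proof. by move=> h; apply: big_ind => //; [exact: (inZz_int 1) | exact: inZzM]. Qed.

Lemma inZzX x n : inZz z x -> inZz z (x ^+ n).
Proof. by move=> Zx; elim: n => [|n IH]; [exact: (inZz_int 1) | rewrite exprS; exact: inZzM]. Qed.

Lemma inZz_zX n : inZz z (z ^+ n).
Proof. exact/inZzX/inZz_z. Qed.

Lemma inZz_sign n : inZz z ((-1) ^+ n).
Proof. exact/inZzX/(inZz_int (-1)). Qed.

Lemma inZz_det n (A : 'M[algC]_n) : (forall i j, inZz z (A i j)) -> inZz z (\det A).
Proof.
move=> ZA; apply: inZz_sum => s _; apply: inZzM; first exact: inZz_sign.
exact: inZz_prod.
Qed.

Lemma inZz_adj n (A : 'M[algC]_n) :
  (forall i j, inZz z (A i j)) -> forall i j, inZz z (\adj A i j).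
Proof.
move=> ZA i j; rewrite mxE; apply: inZzM; first exact: inZz_sign.
by apply: inZz_det => k l; rewrite !mxE.
Qed.

Lemma inZz_mulmx m n l (A : 'M[algC]_(m, n)) (B : 'M[algC]_(n, l)) :
  (forall i j, inZz z (A i j)) -> (forall i j, inZz z (B i j)) ->
  forall i j, inZz z ((A *m B) i j).
Proof. by move=> ZA ZB i j; rewrite mxE; apply: inZz_sum => k _; apply: inZzM. Qed.

Definition unitZz (x : algC) : Prop := exists2 v, inZz z v & x * v = 1.

Lemma unitZz_neq0 x : unitZz x -> x != 0.
Proof. by case=> v _; apply: contra_eqN => /eqP ->; rewrite mul0r eq_sym oner_eq0. Qed.

Lemma unitZzM x y : unitZz x -> unitZz y -> unitZz (x * y).
Proof.
by move=> [v Zv xv1] [w Zw yw1]; exists (v * w); [exact: inZzM | rewrite mulrACA xv1 yw1 mulr1].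
Qed.

Lemma unitZz_prod (I : Type) (r : seq I) (P : pred I) (F : I -> algC) :
  (forall i, P i -> unitZz (F i)) -> unitZz (\prod_(i <- r | P i) F i).
Proof.
move=> h; apply: big_ind => //; last exact: unitZzM.
by exists 1; [exact: (inZz_int 1) | rewrite mulr1].
Qed.

(* Cramer's rule: [\det A^-1 *: \adj A] is an integral inverse of [A]. *)
Lemma inZz_mx_solve n (A : 'M[algC]_n) (w : 'cV[algC]_n) :
  (forall i j, inZz z (A i j)) -> unitZz (\det A) -> (forall i, inZz z (w i 0)) ->
  exists2 x : 'cV_n, (forall i, inZz z (x i 0)) & A *m x = w.
Proof.
move=> ZA [d Zd detA_d] Zw; exists (d *: (\adj A *m w)).
  move=> i; rewrite mxE; apply: inZzM => //.
  by apply: inZz_mulmx (inZz_adj ZA) _ i 0 => k l; rewrite ord1.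
by rewrite -scalemxAr mulmxA mul_mx_adj mul_scalar_mx scalerA mulrC detA_d scale1r.
Qed.

End IntegralElements.

Section Wedderburn.
Variables (p : nat) (z : algC).

Lemma wedderburn_cunit (j : 'I_p) : wedderburn z (@cunit p) j = 1.
Proof.
have p_gt0 : (0 < p)%N by apply: leq_ltn_trans (ltn_ord j).
rewrite /wedderburn (bigD1 (Ordinal p_gt0)) //= big1 ?addr0.
  by rewrite /cunit /= mul1r muln0 expr0.
move=> k ne_k0; rewrite /cunit ifF ?mul0r //.
by apply: contraNF ne_k0 => /eqP k0; apply/eqP/val_inj.
Qed.

Lemma wedderburn_cconv (a b : 'I_p -> algC) (j : 'I_p) :
  z ^+ p = 1 -> wedderburn z (cconv a b) j = wedderburn z a j * wedderburn z b j.
Proof.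
move=> zp1; have p_gt0 : (0 < p)%N by apply: leq_ltn_trans (ltn_ord j).
rewrite /wedderburn /cconv big_distrlr /=.
under eq_bigr do rewrite mulr_suml.
rewrite exchange_big /=; apply: eq_bigr => i _.
under eq_bigr do rewrite mulr_suml big_mkcond.
rewrite exchange_big /=; apply: eq_bigr => l _.
rewrite -big_mkcond /= (big_pred1 (Ordinal (ltn_pmod (i + l) p_gt0))); last first.
  by move=> k /=; rewrite -val_eqE /= eq_sym.
by rewrite /= -(expr_mod _ zp1) modnMmr (expr_mod _ zp1) mulnDr exprD mulrACA.
Qed.

Definition geosum (k : nat) : algC := \sum_(r < k) z ^+ r.

Lemma one_subX_geosum k : 1 - z ^+ k = (1 - z) * geosum k.
Proof. by rewrite -opprB subrX1 -mulNr opprB. Qed.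

Definition geosum_vandermonde : 'M[algC]_p := Vandermonde p (\row_(k < p) geosum k).

Lemma inZz_geosum_vandermonde i k : inZz z (geosum_vandermonde i k).
Proof. by rewrite !mxE; apply/inZzX/inZz_sum => r _; exact: inZz_zX. Qed.

(* Binomial theorem: [\sum_j (-1)^j 'C(i, j) z^(j k) = (1 - z^k)^i = (1 - z)^i geosum k ^ i]. *)
Lemma binomial_transform_wedderburn (a : 'I_p -> algC) (i : 'I_p) :
  binomial_transform (wedderburn z a) i
  = (1 - z) ^+ i * (geosum_vandermonde *m \col_k a k) i 0.
Proof.
rewrite /binomial_transform /wedderburn.
under eq_bigr do rewrite mulr_sumr.
rewrite exchange_big mxE mulr_sumr; apply: eq_bigr => k _.
rewrite !mxE mulrA -exprMn -one_subX_geosum mulrC -[1 - _]addrC exprD1n.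
rewrite (big_ord_widen p (fun j => (- z ^+ k) ^+ j *+ 'C(i, j))) // mulr_sumr.
apply: eq_bigr => j _.
by rewrite (exprNn (z ^+ k)) -exprM (mulnC k j) -mulr_natr; ring.
Qed.

End Wedderburn.

Section PrimeCyclotomic.
Variables (p : nat) (z : algC).
Hypotheses (p_prime : prime p) (z_prim : p.-primitive_root z).

Lemma one_subz_neq0 : 1 - z != 0.
Proof.
rewrite subr_eq0 eq_sym -[z]expr1 -(prim_order_dvd z_prim).
by apply/negP => /dvdn_leq -/(_ isT); rewrite leqNgt prime_gt1.
Qed.

Lemma unitZz_zX i : unitZz z (z ^+ i).
Proof.
exists (z ^+ (i * p.-1)); first exact: inZz_zX.
rewrite -exprD -{1}[i]muln1 -mulnDr add1n prednK ?prime_gt0 //.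
by rewrite mulnC exprM (prim_expr_order z_prim) expr1n.
Qed.

(* [z^m] is again a primitive root, so [z = z^(m i)] for some [i], and
   [geosum z m * geosum (z^m) i = (1 - z^(m i)) / (1 - z) = 1]. *)
Lemma unitZz_geosum m : (0 < m < p)%N -> unitZz z (geosum z m).
Proof.
case/andP=> m_gt0 lt_mp.
have zm_prim : p.-primitive_root (z ^+ m).
  rewrite prim_root_exp_coprime // coprime_sym prime_coprime //.
  by apply/negP => /dvdn_leq -/(_ m_gt0); rewrite leqNgt lt_mp.
have [i z_zmi] := prim_rootP zm_prim (prim_expr_order z_prim).
exists (geosum (z ^+ m) i); first by apply: inZz_sum => r _; rewrite -exprM; exact: inZz_zX.
apply: (mulfI one_subz_neq0).
by rewrite mulr1 mulrA -one_subX_geosum -one_subX_geosum -z_zmi.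
Qed.

Lemma geosum_sub i j : (i <= j)%N -> geosum z j - geosum z i = z ^+ i * geosum z (j - i).
Proof.
move=> le_ij; apply: (mulfI one_subz_neq0).
rewrite mulrBr -!one_subX_geosum mulrCA -one_subX_geosum mulrBr -exprD subnKC //.
by rewrite mulr1 opprB addrC addrA subrK.
Qed.

Lemma unitZz_det_geosum_vandermonde : unitZz z (\det (geosum_vandermonde p z)).
Proof.
rewrite /geosum_vandermonde det_Vandermonde.
apply: unitZz_prod => i _; apply: unitZz_prod => j lt_ij.
rewrite !mxE (geosum_sub (ltnW lt_ij)); apply: unitZzM; first exact: unitZz_zX.
by apply: unitZz_geosum; rewrite subn_gt0 lt_ij (leq_ltn_trans (leq_subr _ _)).
Qed.

Lemma geosum_vandermonde_unitmx : geosum_vandermonde p z \in unitmx.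
Proof. by rewrite unitmxE unitfE; apply: unitZz_neq0 unitZz_det_geosum_vandermonde. Qed.

Lemma wedderburn_inj (a b : 'I_p -> algC) :
  (forall j, wedderburn z a j = wedderburn z b j) -> a =1 b.
Proof.
move=> eq_ab k.
have : geosum_vandermonde p z *m \col_k a k = geosum_vandermonde p z *m \col_k b k.
  apply/matrixP => i l; rewrite ord1.
  apply: (mulfI (expf_neq0 i one_subz_neq0)).
  rewrite -!binomial_transform_wedderburn.
  by apply: eq_bigr => j _; rewrite eq_ab.
move/(congr1 (mulmx (invmx (geosum_vandermonde p z)))).
by rewrite !mulKmx ?geosum_vandermonde_unitmx // => /matrixP/(_ k 0); rewrite !mxE.
Qed.

Lemma wedderburn_image_W1 (a : 'I_p -> algC) (y : 'I_p -> algC) :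
  (forall k, inZz z (a k)) -> (forall j, wedderburn z a j = y j) -> W1 z y.
Proof.
move=> Za eq_ay; split=> [j | i].
  by rewrite -eq_ay; apply: inZz_sum => k _; apply: inZzM => //; exact: inZz_zX.
exists ((geosum_vandermonde p z *m \col_k a k) i 0).
  by apply: inZz_mulmx => [|k l]; [exact: inZz_geosum_vandermonde | rewrite mxE].
rewrite -binomial_transform_wedderburn.
by apply: eq_bigr => j _; rewrite eq_ay.
Qed.

Lemma W1_wedderburn_image (y : 'I_p -> algC) :
  W1 z y -> exists a : 'I_p -> algC, (forall k, inZz z (a k)) /\
                                    forall j, wedderburn z a j = y j.
Proof.
case=> _ /fin_all_exists2 [w Zw transform_y].
have Zcol_w i : inZz z ((\col_i w i) i 0) by rewrite mxE.
have [x Zx Vx_w] := inZz_mx_solve (@inZz_geosum_vandermonde p z)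
  unitZz_det_geosum_vandermonde Zcol_w.
exists (fun k => x k 0); split => //; apply: binomial_transform_inj => i.
rewrite binomial_transform_wedderburn (_ : \col_k x k 0 = x).
  by rewrite Vx_w mxE -transform_y.
by apply/matrixP => k l; rewrite mxE ord1.
Qed.

End PrimeCyclotomic.

Theorem proposition3p19 (p : nat) (zeta : algC) :
  prime p -> p.-primitive_root zeta ->
  (* omega_p is a ring homomorphism Z[zeta]C_p -> prod_j Z[zeta] *)
  (forall j : 'I_p, wedderburn zeta (@cunit p) j = 1) /\
  (forall a b : 'I_p -> algC, (forall k, inZz zeta (a k)) -> (forall k, inZz zeta (b k)) ->
     forall j, wedderburn zeta (cconv a b) j = wedderburn zeta a j * wedderburn zeta b j) /\
  (* it is injective *)
  (forall a b : 'I_p -> algC, (forall k, inZz zeta (a k)) -> (forall k, inZz zeta (b k)) ->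
     (forall j, wedderburn zeta a j = wedderburn zeta b j) -> forall k, a k = b k) /\
  (* and its image is exactly W^(1)_p *)
  (forall y : 'I_p -> algC,
     (exists a : 'I_p -> algC, (forall k, inZz zeta (a k)) /\
                               forall j, wedderburn zeta a j = y j)
     <-> W1 zeta y).
Proof.
move=> p_prime zeta_prim; split; first exact: wedderburn_cunit.
split; first by move=> a b _ _ j; apply/wedderburn_cconv/prim_expr_order.
split; first by move=> a b _ _; exact: wedderburn_inj.
move=> y; split; last exact: W1_wedderburn_image.
by case=> a [Za eq_ay]; exact: wedderburn_image_W1 Za eq_ay.
Qed.
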